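(* For integers $n\ge2$ and $1\le l\le\lfloor n/2\rfloor$, $$p^{(H)}_n(l,n-l)=\Big(\tfrac1{\sqrt2}\Big)^{n-2l+1}(-1)^{n-l}\Big\{P^{0,n-2l}_{l-1}(0)-P^{1,n-2l}_{l-1}(0)\Big\},$$ $$q^{(H)}_n(l,n-l)=\Big(\tfrac1{\sqrt2}\Big)^{n-2l+1}(-1)^{n-l}\Big\{\Big(\frac{n-l}{l}\Big)P^{1,n-2l}_{l-1}(0)-P^{0,n-2l}_{l-1}(0)\Big\}.$$
   Context: For $\min\{l,m\}\ge1$, $n=l+m$: $p^{(H)}_n(l,m)=(1/\sqrt2)^{n-1}\sum_{\gamma=1}^{(l-1)\wedge m}(-1)^{m-\gamma}\binom{l-1}{\gamma}\binom{m-1}{\gamma-1}$ and $q^{(H)}_n(l,m)=(1/\sqrt2)^{n-1}\sum_{\gamma=1}^{l\wedge(m-1)}(-1)^{m-\gamma-1}\binom{l-1}{\gamma-1}\binom{m-1}{\gamma}$ (empty sums are $0$). $P^{\nu,\mu}_k(x)$ is the Jacobi polynomial, orthogonal on $[-1,1]$ w.r.t. $(1-x)^\nu(1+x)^\mu$, normalized by $P^{\nu,\mu}_k(x)=\frac{\Gamma(k+\nu+1)}{\Gamma(k+1)\Gamma(\nu+1)}\,{}_2F_1(-k,k+\nu+\mu+1;\nu+1;(1-x)/2)$. *)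

From Stdlib Require Import Reals Lra Lia Arith List.
Open Scope R_scope.

Definition rsum (a N : nat) (f : nat -> R) : R :=
  fold_right Rplus 0 (map f (seq a N)).

Fixpoint poch (x : R) (j : nat) : R :=
  match j with
  | O => 1
  | S j' => poch x j' * (x + INR j')
  end.

(* 2F1(-k, b; c; x): the series terminates since (-k)_j = 0 for j > k,
   so it is the finite sum over j = 0..k. *)
Definition hyp2F1_term (k : nat) (b c x : R) : R :=
  rsum 0 (S k) (fun j =>
    poch (- INR k) j * poch b j / (poch c j * INR (fact j)) * x ^ j).

(* Jacobi polynomial P^{nu,mu}_k(x) for natural parameters nu, mu:
   Gamma(k+nu+1)/(Gamma(k+1) Gamma(nu+1)) = (k+nu)!/(k! nu!). *)
Definition jacobiP (nu mu k : nat) (x : R) : R :=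
  INR (fact (k + nu)) / (INR (fact k) * INR (fact nu)) *
  hyp2F1_term k (INR k + INR nu + INR mu + 1) (INR nu + 1) ((1 - x) / 2).

Definition pH (l m : nat) : R :=
  (1 / sqrt 2) ^ (l + m - 1) *
  rsum 1 (Nat.min (l - 1) m) (fun g =>
    (-1) ^ (m - g) * C (l - 1) g * C (m - 1) (g - 1)).

Definition qH (l m : nat) : R :=
  (1 / sqrt 2) ^ (l + m - 1) *
  rsum 1 (Nat.min l (m - 1)) (fun g =>
    (-1) ^ (m - g - 1) * C (l - 1) (g - 1) * C (m - 1) g).

(* Write l = k+1, m = n-l = c+1 and mu = n-2l, so that c = k+mu.  Both pH and
   qH are, up to the factor (1/sqrt 2)^(n-1) (-1)^m, alternating convolutions
   of binomial coefficients:
     A = sum_i (-1)^i C(k,i) C(c,i),   B = sum_i (-1)^i C(k+1,i+1) C(c,i),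
     D = sum_i (-1)^i C(k,i) C(c,i+1),
   with pH ~ A - B (Pascal's rule) and qH ~ D, where (k+1) D = (c+1) B - (k+1) A
   (absorption identity, termwise).  On the Jacobi side, expanding the
   terminating 2F1 gives 2^k P^{nu,mu}_k(0) = sum_j (-1)^j C(k+nu,k-j)
   C(k+nu+mu+j,j) 2^(k-j), and a double induction turns this into the
   convolution sum_s (-1)^s C(k+nu,k-s) C(k+mu,s); for nu = 0, 1 these are A
   and B. *)
From Stdlib Require Import Reals Lra Lia Arith.
Open Scope R_scope.

Fixpoint sumN (N : nat) (f : nat -> R) : R :=
  match N with O => 0 | S N' => sumN N' f + f N' end.

Lemma sumN_S N f : sumN (S N) f = sumN N f + f N.
Proof. reflexivity. Qed.

Lemma sumN_ext N f g : (forall i, (i < N)%nat -> f i = g i) -> sumN N f = sumN N g.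
Proof. induction N; intros H; simpl; auto. rewrite IHN, H; auto. Qed.

Lemma sumN_plus N f g : sumN N (fun i => f i + g i) = sumN N f + sumN N g.
Proof. induction N; simpl; [lra|]. rewrite IHN; lra. Qed.

Lemma sumN_minus N f g : sumN N (fun i => f i - g i) = sumN N f - sumN N g.
Proof. induction N; simpl; [lra|]. rewrite IHN; lra. Qed.

Lemma sumN_scal N a f : sumN N (fun i => a * f i) = a * sumN N f.
Proof. induction N; simpl; [lra|]. rewrite IHN; lra. Qed.

Lemma sumN_shift N f : sumN (S N) f = f O + sumN N (fun i => f (S i)).
Proof. induction N; simpl in *; [lra|]. rewrite IHN; lra. Qed.

Lemma sumN_zero N f : (forall i, (i < N)%nat -> f i = 0) -> sumN N f = 0.
Proof. induction N; intros H; simpl; auto. rewrite IHN, H; auto; lra. Qed.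

Lemma sumN_extend N T f : (N <= T)%nat -> (forall i, (N <= i)%nat -> f i = 0) ->
  sumN T f = sumN N f.
Proof. intros HT H. induction HT; auto. simpl. rewrite IHHT, H; [lra|lia]. Qed.

Lemma rsum_sumN a N f : rsum a N f = sumN N (fun i => f (a + i)%nat).
Proof.
  revert a; induction N; intros a; [reflexivity|].
  rewrite sumN_shift. unfold rsum in *. simpl. rewrite IHN, Nat.add_0_r.
  f_equal. apply sumN_ext; intros; f_equal; lia.
Qed.

Lemma sign_sub m j : (j <= m)%nat -> (-1)^(m - j) = (-1)^m * (-1)^j.
Proof.
  intros H. replace m with ((m - j) + j)%nat at 2 by lia.
  rewrite pow_add, Rmult_assoc, <- pow_add.
  replace (j + j)%nat with (2 * j)%nat by lia.
  rewrite pow_mult. replace ((-1)^2) with 1 by ring. rewrite pow1. ring.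
Qed.

Lemma inv_sqrt2_pow k e : (1 / sqrt 2) ^ (2 * k + e) = (1/2)^k * (1 / sqrt 2) ^ e.
Proof.
  rewrite pow_add, pow_mult. f_equal. f_equal.
  assert (H := sqrt_sqrt 2 ltac:(lra)).
  assert (sqrt 2 <> 0) by (intro E; rewrite E in H; lra).
  simpl. rewrite Rmult_1_r.
  replace (1 / sqrt 2 * (1 / sqrt 2)) with (1 / (sqrt 2 * sqrt 2)) by (field; auto).
  rewrite H. reflexivity.
Qed.

(* Binomial coefficients by Pascal's rule; unlike [C], [bin n k = 0] for
   k > n, which lets all sums below run over a uniform range. *)
Fixpoint bin (n k : nat) : R :=
  match n, k with
  | O, O => 1
  | O, S _ => 0
  | S _, O => 1
  | S n', S k' => bin n' k' + bin n' (S k')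
  end.

Lemma bin_over n k : (n < k)%nat -> bin n k = 0.
Proof.
  revert k; induction n; intros [|k] H; simpl; try lia; auto.
  rewrite !IHn; [lra|lia|lia].
Qed.

Lemma C_n0 n : C n 0 = 1.
Proof. unfold C. rewrite Nat.sub_0_r. simpl. field. apply INR_fact_neq_0. Qed.

Lemma C_nn n : C n n = 1.
Proof. unfold C. rewrite Nat.sub_diag. simpl. field. apply INR_fact_neq_0. Qed.

Lemma bin_C n k : (k <= n)%nat -> bin n k = C n k.
Proof.
  revert k; induction n; intros [|k] H; simpl; try lia; try (rewrite C_n0; auto).
  destruct (Nat.eq_dec k n) as [->|Hn].
  - rewrite (bin_over n (S n)) by lia. rewrite IHn by lia. rewrite !C_nn. lra.
  - rewrite !IHn by lia. apply pascal. lia.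
Qed.

Lemma bin_sym n k : (k <= n)%nat -> bin n k = bin n (n - k).
Proof. intros H. rewrite !bin_C by lia. apply pascal_step1; auto. Qed.

Lemma bin_absorb n i : INR (S n) * bin n i = INR (S i) * bin (S n) (S i).
Proof.
  destruct (le_lt_dec i n) as [H|H].
  - rewrite !bin_C by lia. unfold C.
    replace (S n - S i)%nat with (n - i)%nat by lia.
    rewrite !fact_simpl, !mult_INR.
    pose proof (INR_fact_neq_0 i). pose proof (INR_fact_neq_0 (n - i)).
    assert (INR (S i) <> 0) by (apply not_0_INR; lia).
    field. auto.
  - rewrite !bin_over by lia. lra.
Qed.

Definition bin_prev (n k : nat) : R := match k with O => 0 | S k' => bin n k' end.

Lemma bin_pascal n k : bin (S n) k = bin n k + bin_prev n k.
Proof. destruct k; simpl; [destruct n; simpl; lra | lra]. Qed.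

(* 2^k P^{nu,mu}_k(0) in expanded form, with b = k+nu and M = k+nu+mu. *)
Definition jacobi_sum (k b M : nat) : R :=
  sumN (S k) (fun j => (-1)^j * bin b (k - j) * bin (M + j) j * 2^(k - j)).

Definition alt_conv (k b c : nat) : R :=
  sumN (S k) (fun s => (-1)^s * bin b (k - s) * bin c s).

(* Both sums obey the same recursion in (k, b): this drives the induction. *)
Lemma jacobi_sum_rec k b M :
  jacobi_sum (S k) (S b) M = jacobi_sum (S k) b M + 2 * jacobi_sum k b M.
Proof.
  unfold jacobi_sum. rewrite !(sumN_S (S k)), Nat.sub_diag.
  assert (E : sumN (S k) (fun j => (-1)^j * bin (S b) (S k - j) * bin (M + j) j * 2^(S k - j))
    = sumN (S k) (fun j => (-1)^j * bin b (S k - j) * bin (M + j) j * 2^(S k - j))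
      + 2 * sumN (S k) (fun j => (-1)^j * bin b (k - j) * bin (M + j) j * 2^(k - j))).
  { rewrite <- sumN_scal, <- sumN_plus. apply sumN_ext. intros i Hi.
    replace (S k - i)%nat with (S (k - i)) by lia. simpl bin. simpl pow. ring. }
  rewrite E. destruct b; simpl; ring.
Qed.

Lemma alt_conv_rec k b c :
  alt_conv (S k) (S b) c = alt_conv (S k) b (S c) + 2 * alt_conv k b c.
Proof.
  unfold alt_conv.
  set (X := sumN (S (S k)) (fun s => (-1)^s * bin b (S k - s) * bin c s)).
  assert (Eb : sumN (S (S k)) (fun s => (-1)^s * bin (S b) (S k - s) * bin c s)
     = X + alt_conv k b c).
  { unfold X, alt_conv.
    rewrite (sumN_ext (S (S k)) _ (fun s => (-1)^s * bin b (S k - s) * bin c s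
            + (-1)^s * bin_prev b (S k - s) * bin c s))
      by (intros; rewrite bin_pascal; ring).
    rewrite sumN_plus. f_equal. rewrite sumN_S, Nat.sub_diag.
    change (bin_prev b 0) with 0.
    rewrite Rmult_0_r, Rmult_0_l, Rplus_0_r. apply sumN_ext. intros i Hi.
    replace (S k - i)%nat with (S (k - i)) by lia. reflexivity. }
  assert (Ec : sumN (S (S k)) (fun s => (-1)^s * bin b (S k - s) * bin (S c) s)
     = X - alt_conv k b c).
  { unfold X, alt_conv.
    rewrite (sumN_ext (S (S k)) _ (fun s => (-1)^s * bin b (S k - s) * bin c s
            + (-1)^s * bin b (S k - s) * bin_prev c s))
      by (intros; rewrite bin_pascal; ring).
    rewrite sumN_plus, (sumN_shift (S k) (fun s => _ * bin_prev c s)).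
    change (bin_prev c 0) with 0. rewrite Rmult_0_r, Rplus_0_l.
    unfold Rminus. f_equal.
    replace (- _) with (-1 * sumN (S k) (fun s => (-1)^s * bin b (k - s) * bin c s))
      by ring.
    rewrite <- sumN_scal.
    apply sumN_ext; intros; simpl; ring. }
  rewrite Eb, Ec. unfold alt_conv. ring.
Qed.

Lemma jacobi_sum_alt_conv k : forall b c M,
  (M + k = b + c)%nat -> jacobi_sum k b M = alt_conv k b c.
Proof.
  induction k; intros b c M H.
  - unfold jacobi_sum, alt_conv; simpl. destruct b, M, c; simpl; ring.
  - induction b in c, M, H |- *.
    + unfold jacobi_sum, alt_conv. rewrite !(sumN_S (S k)), Nat.sub_diag.
      rewrite !sumN_zero.
      * replace c with (M + S k)%nat by lia. simpl. ring.
      * intros i Hi. replace (S k - i)%nat with (S (k - i)) by lia. simpl. ring.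
      * intros i Hi. replace (S k - i)%nat with (S (k - i)) by lia. simpl. ring.
    + rewrite jacobi_sum_rec, alt_conv_rec, (IHb (S c) M), (IHk b c M) by lia.
      reflexivity.
Qed.

Lemma poch_neg k j : (j <= k)%nat ->
  poch (- INR k) j = (-1)^j * INR (fact k) / INR (fact (k - j)).
Proof.
  induction j; intros H.
  - simpl. rewrite Nat.sub_0_r. field. apply INR_fact_neq_0.
  - simpl poch. rewrite IHj by lia.
    replace (k - j)%nat with (S (k - S j)) by lia.
    rewrite fact_simpl, mult_INR.
    replace (- INR k + INR j) with (- INR (S (k - S j)))
      by (rewrite S_INR, minus_INR, S_INR by lia; ring).
    pose proof (INR_fact_neq_0 (k - S j)).
    assert (INR (S (k - S j)) <> 0) by (apply not_0_INR; lia).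
    simpl pow. field. auto.
Qed.

Lemma poch_pos x j : poch (INR x + 1) j = INR (fact (x + j)) / INR (fact x).
Proof.
  induction j.
  - simpl. rewrite Nat.add_0_r. field. apply INR_fact_neq_0.
  - simpl poch. rewrite IHj. replace (x + S j)%nat with (S (x + j)) by lia.
    rewrite fact_simpl, mult_INR, S_INR, plus_INR.
    pose proof (INR_fact_neq_0 x). field. auto.
Qed.

Lemma jacobi_at_0_sum nu mu k :
  jacobiP nu mu k 0 = (1/2)^k * jacobi_sum k (k + nu) (k + nu + mu).
Proof.
  unfold jacobiP, hyp2F1_term, jacobi_sum. rewrite rsum_sumN, <- !sumN_scal.
  apply sumN_ext. intros j Hj. simpl (0 + j)%nat.
  replace (INR k + INR nu + INR mu + 1) with (INR (k + nu + mu) + 1)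
    by (rewrite !plus_INR; ring).
  rewrite poch_neg, !poch_pos, !bin_C by lia. unfold C.
  replace (k + nu - (k - j))%nat with (nu + j)%nat by lia.
  replace (k + nu + mu + j - j)%nat with (k + nu + mu)%nat by lia.
  replace ((1 - 0) / 2) with (/2) by field. replace (1/2) with (/2) by field.
  replace ((/2)^k) with ((/2)^j * (/2)^(k - j))
    by (rewrite <- pow_add; f_equal; lia).
  rewrite !pow_inv.
  pose proof (INR_fact_neq_0 k). pose proof (INR_fact_neq_0 nu).
  pose proof (INR_fact_neq_0 j). pose proof (INR_fact_neq_0 (k - j)).
  pose proof (INR_fact_neq_0 (nu + j)). pose proof (INR_fact_neq_0 (k + nu + mu)).
  assert (2^(k-j) <> 0) by (apply pow_nonzero; lra).
  assert (2^j <> 0) by (apply pow_nonzero; lra).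
  field. repeat split; auto.
Qed.

Lemma jacobi_at_0 nu mu k :
  jacobiP nu mu k 0 = (1/2)^k * alt_conv k (k + nu) (k + mu).
Proof.
  rewrite jacobi_at_0_sum, (jacobi_sum_alt_conv k _ (k + mu)) by lia. reflexivity.
Qed.

Definition convA (k c : nat) : R := sumN (S k) (fun i => (-1)^i * bin k i * bin c i).
Definition convB (k c : nat) : R := sumN (S k) (fun i => (-1)^i * bin (S k) (S i) * bin c i).
Definition convD (k c : nat) : R := sumN (S k) (fun i => (-1)^i * bin k i * bin c (S i)).

Lemma jacobi0_at_0 mu k : jacobiP 0 mu k 0 = (1/2)^k * convA k (k + mu).
Proof.
  rewrite jacobi_at_0, Nat.add_0_r. unfold alt_conv, convA. f_equal.
  apply sumN_ext. intros i Hi. rewrite (bin_sym k (k - i)) by lia.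
  do 3 f_equal. lia.
Qed.

Lemma jacobi1_at_0 mu k : jacobiP 1 mu k 0 = (1/2)^k * convB k (k + mu).
Proof.
  rewrite jacobi_at_0, Nat.add_1_r. unfold alt_conv, convB. f_equal.
  apply sumN_ext. intros i Hi. rewrite (bin_sym (S k) (k - i)) by lia.
  do 3 f_equal. lia.
Qed.

(* Termwise absorption gives (k+1) D = (c+1) B - (k+1) A. *)
Lemma convD_relation k c :
  convD k c = INR (S c) / INR (S k) * convB k c - convA k c.
Proof.
  assert (Hk : INR (S k) <> 0) by (apply not_0_INR; lia).
  apply (Rmult_eq_reg_l (INR (S k))); auto.
  replace (INR (S k) * (INR (S c) / INR (S k) * convB k c - convA k c))
    with (INR (S c) * convB k c - INR (S k) * convA k c) by (field; auto).
  unfold convA, convB, convD. rewrite <- !sumN_scal, <- sumN_minus.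
  apply sumN_ext. intros i Hi.
  pose proof (bin_absorb k i) as Ek. pose proof (bin_absorb c i) as Ec.
  transitivity ((-1)^i * bin c (S i) * (INR (S k) * bin k i)); [ring|].
  symmetry.
  transitivity ((-1)^i * bin (S k) (S i) * (INR (S c) * bin c i)
                - (-1)^i * bin c i * (INR (S k) * bin k i)); [ring|].
  rewrite Ec, Ek. change (bin (S c) (S i)) with (bin c i + bin c (S i)). ring.
Qed.

(* pH, via Pascal's rule C(k,i+1) = C(k+1,i+1) - C(k,i). *)
Lemma pH_conv k c :
  pH (S k) (S c) = (1 / sqrt 2) ^ (S k + S c - 1) * (-1)^(S c) * (convA k c - convB k c).
Proof.
  unfold pH. rewrite rsum_sumN, Rmult_assoc. f_equal.
  replace (S k - 1)%nat with k by lia. replace (S c - 1)%nat with c by lia.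
  rewrite (sumN_ext _ _ (fun i => (-1)^(S c) * ((-1)^(S i) * bin k (S i) * bin c i))).
  2:{ intros i Hi. simpl (1 + i)%nat. rewrite sign_sub by lia.
      rewrite !bin_C by lia. replace (S i - 1)%nat with i by lia. ring. }
  rewrite sumN_scal. f_equal.
  rewrite <- (sumN_extend (Nat.min k (S c)) (S k)).
  2:{ lia. }
  2:{ intros i Hi. destruct (Nat.min_spec k (S c)) as [[_ E]|[_ E]]; rewrite E in Hi.
      - rewrite (bin_over k (S i)) by lia. ring.
      - rewrite (bin_over c i) by lia. ring. }
  unfold convA, convB. rewrite <- sumN_minus. apply sumN_ext. intros i Hi.
  simpl bin. simpl pow. ring.
Qed.

Lemma qH_conv k c :
  qH (S k) (S c) = (1 / sqrt 2) ^ (S k + S c - 1) * (-1)^(S c) * convD k c.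
Proof.
  unfold qH. rewrite rsum_sumN, Rmult_assoc. f_equal.
  replace (S k - 1)%nat with k by lia. replace (S c - 1)%nat with c by lia.
  rewrite (sumN_ext _ _ (fun i => (-1)^(S c) * ((-1)^i * bin k i * bin c (S i)))).
  2:{ intros i Hi. simpl (1 + i)%nat.
      replace (S c - S i - 1)%nat with (S c - (i + 2))%nat by lia.
      rewrite sign_sub, pow_add by lia. rewrite !bin_C by lia.
      replace (S i - 1)%nat with i by lia. ring. }
  rewrite sumN_scal. f_equal. unfold convD. symmetry.
  apply sumN_extend; [lia|].
  intros i Hi. destruct (Nat.min_spec (S k) c) as [[_ E]|[_ E]]; rewrite E in Hi.
  - rewrite (bin_over k i) by lia. ring.
  - rewrite (bin_over c (S i)) by lia. ring.
Qed.

Theorem mainTheorem8 (n l : nat) :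
  (2 <= n)%nat -> (1 <= l)%nat -> (l <= n / 2)%nat ->
  pH l (n - l) =
    (1 / sqrt 2) ^ (n - 2 * l + 1) * (-1) ^ (n - l) *
    (jacobiP 0 (n - 2 * l) (l - 1) 0 - jacobiP 1 (n - 2 * l) (l - 1) 0)
  /\
  qH l (n - l) =
    (1 / sqrt 2) ^ (n - 2 * l + 1) * (-1) ^ (n - l) *
    ((INR (n - l) / INR l) * jacobiP 1 (n - 2 * l) (l - 1) 0
     - jacobiP 0 (n - 2 * l) (l - 1) 0).
Proof.
  intros _ Hl Hhalf.
  assert (H2l : (2 * l <= n)%nat) by (pose proof (Nat.Div0.mul_div_le n 2); lia).
  destruct l as [|k]; [lia|].
  set (mu := (n - 2 * S k)%nat).
  replace (n - S k)%nat with (S (k + mu)) by (unfold mu; lia).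
  replace (S k - 1)%nat with k by lia.
  assert (Hpow : (1 / sqrt 2) ^ (S k + S (k + mu) - 1)
                 = (1/2)^k * (1 / sqrt 2) ^ (mu + 1)).
  { rewrite <- inv_sqrt2_pow. f_equal. lia. }
  rewrite pH_conv, qH_conv, convD_relation, jacobi0_at_0, jacobi1_at_0, Hpow.
  split; ring.
Qed.
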